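(* The product in $\mathbf{Sys}(L)$ of a set-indexed family of $T_0$ affine systems is $T_0$.
   Context: Fix a variety $\mathbf{A}$ of algebras (full subcategory of the category of $\Omega$-algebras and homomorphisms closed under products, subalgebras and homomorphic images) having all set-indexed coproducts $(A_i\xrightarrow{\mu_i}\coprod_iA_i)_i$. Fix an $\mathbf{A}$-algebra $L$; $L^X$ is the power algebra. An affine system is $(X,\kappa,A)$ with $X$ a set, $A$ an algebra, $\kappa:A\to L^X$ a homomorphism; a morphism $(f,\varphi):(X_1,\kappa_1,A_1)\to(X_2,\kappa_2,A_2)$ is a map $f:X_1\to X_2$ with a homomorphism $\varphi:A_2\to A_1$ such that $\kappa_1(\varphi(a))(x)=\kappa_2(a)(f(x))$ for all $a\in A_2,x\in X_1$; this is $\mathbf{Sys}(L)$. A system is $T_0$ if for all $x,y\in X$, $\kappa(a)(x)=\kappa(a)(y)$ for all $a\in A$ implies $x=y$. The product of $(X_i,\kappa_i,A_i)_{i\in I}$ is $(\prod_iX_i,\kappa,\coprod_iA_i)$ with projections $(\pi_i,\mu_i)$, where $\kappa$ is the unique homomorphism with $\kappa(\mu_i(a))(x)=\kappa_i(a)(x_i)$. *)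

Record signature := Signature { op : Type ; arity : op -> Type }.

Record algebra (S : signature) := Algebra {
  carrier :> Type ;
  interp : forall o : op S, (@arity S o -> carrier) -> carrier }.

Arguments interp {S} a o _.
Arguments carrier {S} a.

Definition is_hom (S : signature) (A B : algebra S) (f : A -> B) : Prop :=
  forall (o : op S) (args : @arity S o -> A),
    f (interp A o args) = interp B o (fun k => f (args k)).

Arguments is_hom {S A B} f.

Definition prod_alg (S : signature) (I : Type) (A : I -> algebra S) : algebra S :=
  @Algebra S (forall i, A i)
    (fun o args i => interp (A i) o (fun k => args k i)).

Arguments prod_alg {S I} A.

Definition power_alg (S : signature) (L : algebra S) (X : Type) : algebra S :=
  prod_alg (fun _ : X => L).

Arguments power_alg {S} L X.

(* A variety: a class of Omega-algebras closed under products, subalgebras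
   (domains of injective homomorphisms into members) and homomorphic images
   (codomains of surjective homomorphisms from members). *)
Record variety (S : signature) := Variety {
  vmem :> algebra S -> Prop ;
  v_prod : forall (I : Type) (A : I -> algebra S),
      (forall i, vmem (A i)) -> vmem (prod_alg A) ;
  v_sub : forall (A B : algebra S) (m : B -> A),
      vmem A -> is_hom m -> (forall x y, m x = m y -> x = y) -> vmem B ;
  v_img : forall (A B : algebra S) (e : A -> B),
      vmem A -> is_hom e -> (forall y, exists x, e x = y) -> vmem B }.

Arguments vmem {S} v a.

Definition is_coproduct (S : signature) (V : variety S) (I : Type)
    (A : I -> algebra S) (C : algebra S) (mu : forall i, A i -> C) : Prop :=
  V C /\ (forall i, is_hom (mu i)) /\
  forall (D : algebra S) (f : forall i, A i -> D),
    V D -> (forall i, is_hom (f i)) ->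
    exists h : C -> D, is_hom h /\ (forall i a, h (mu i a) = f i a) /\
      forall h' : C -> D, is_hom h' -> (forall i a, h' (mu i a) = f i a) ->
        forall c, h' c = h c.

Arguments is_coproduct {S} V {I} A C mu.

Definition has_coproducts (S : signature) (V : variety S) : Prop :=
  forall (I : Type) (A : I -> algebra S), (forall i, V (A i)) ->
    exists (C : algebra S) (mu : forall i, A i -> C), is_coproduct V A C mu.

Arguments has_coproducts {S} V.

Record system (S : signature) (V : variety S) (L : algebra S) := System {
  sX : Type ;
  sA : algebra S ;
  sA_in : V sA ;
  kappa : sA -> (sX -> L) ;
  kappa_hom : @is_hom S sA (power_alg L sX) kappa }.

Arguments system {S} V L.
Arguments sX {S V L} s.
Arguments sA {S V L} s.
Arguments kappa {S V L} s _ _.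

Arguments System {S V L} sX sA sA_in kappa kappa_hom.

Definition T0 (S : signature) (V : variety S) (L : algebra S)
    (s : system V L) : Prop :=
  forall x y : sX s, (forall a : sA s, kappa s a x = kappa s a y) -> x = y.

Arguments T0 {S V L} s.

(* The product system (prod_i X_i, kappa, coprod_i A_i), given a coproduct
   (C, mu) of the algebras A_i and the homomorphism kappa : C -> L^(prod X_i)
   with kappa (mu_i a) x = kappa_i a (x_i). *)
Definition product_system (S : signature) (V : variety S) (L : algebra S)
    (I : Type) (F : I -> system V L) (C : algebra S)
    (mu : forall i, sA (F i) -> C) (HC : is_coproduct V (fun i => sA (F i)) C mu)
    (k : C -> (forall i, sX (F i)) -> L)
    (Hk : @is_hom S C (power_alg L (forall i, sX (F i))) k) : system V L :=
  System (forall i, sX (F i)) C (proj1 HC) k Hk.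

Arguments product_system {S V L I F C mu} HC k Hk.

From Stdlib Require Import FunctionalExtensionality.

Theorem proposition9 (S : signature) (V : variety S) (L : algebra S)
    (HL : V L) (Hcop : has_coproducts V)
    (I : Type) (F : I -> system V L)
    (C : algebra S) (mu : forall i, sA (F i) -> C)
    (HC : is_coproduct V (fun i => sA (F i)) C mu)
    (k : C -> (forall i, sX (F i)) -> L)
    (Hk : @is_hom S C (power_alg L (forall i, sX (F i))) k)
    (Hkmu : forall i (a : sA (F i)) (x : forall j, sX (F j)),
        k (mu i a) x = kappa (F i) a (x i)) :
  (forall i, T0 (F i)) -> T0 (product_system HC k Hk).
Proof.
  (* Testing only on the images [mu i a] of the coprojections already
     separates points. *)
  intros HT0 x y Hxy.
  apply functional_extensionality_dep; intro i.
  apply (HT0 i); intro a.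
  rewrite <- (Hkmu i a x), <- (Hkmu i a y).
  exact (Hxy (mu i a)).
Qed.
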